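(* Let $f(z)=\sum_{j\ge 1} b_j z^j$ be analytic in $\mathbb{D}$ with $\|f\|_{\mathcal{B}}\le 1$ and $b_j\ge 0$ for all $j\ge 1$. Then for every integer $n\ge 2$, $$ \mathcal{F}_n(f)=\sum_{k=1}^n k|b_k|^2\le n B_n^2, $$ and equality holds only for $f(z)=B_n z^n$.
   Context: $\mathbb{D}$ is the open unit disc. The Bloch space $\mathcal{B}$ consists of analytic functions $f$ on $\mathbb{D}$ with finite norm $\|f\|_{\mathcal{B}}=|f(0)|+\sup_{z\in\mathbb{D}}(1-|z|^2)|f'(z)|$. For $n\ge 2$, $B_n=\frac{n+1}{2n}\left(\frac{n+1}{n-1}\right)^{(n-1)/2}$ (this is the sharp bound for $|b_n|$ over functions $f=\sum_{k\ge1}b_kz^k$ with $\|f\|_{\mathcal{B}}\le 1$), and $B_1=1$. *)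

From Stdlib Require Import Reals.
From Coquelicot Require Import Coquelicot.
Open Scope R_scope.

Definition in_disc (z : C) : Prop := Cmod z < 1.

Definition has_taylor_coeffs (b : nat -> R) (f : C -> C) : Prop :=
  forall z : C, in_disc z -> is_pseries (fun j => RtoC (b j)) z (f z).

(* Derivative of f(z)=sum_j b_j z^j on the disc: the (termwise) derivative
   series sum_j (j+1) b_(j+1) z^j (Coquelicot's [PS_derive]). *)
Definition is_deriv_value (b : nat -> R) (z l : C) : Prop :=
  is_pseries (fun j => RtoC (PS_derive b j)) z l.

(* ||f||_B <= 1, i.e. |f(0)| + sup_{z in D} (1-|z|^2)|f'(z)| <= 1,
   written pointwise (equivalent to the bound on the supremum). *)
Definition bloch_norm_le1 (b : nat -> R) (f : C -> C) : Prop :=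
  forall z l : C, in_disc z -> is_deriv_value b z l ->
    Cmod (f (RtoC 0)) + (1 - Cmod z ^ 2) * Cmod l <= 1.

Definition Bconst (n : nat) : R :=
  match n with
  | 1%nat => 1
  | _ => (INR n + 1) / (2 * INR n) *
         Rpower ((INR n + 1) / (INR n - 1)) ((INR n - 1) / 2)
  end.

Definition calF (b : nat -> R) (n : nat) : R :=
  sum_f 1 n (fun k => INR k * Rabs (b k) ^ 2).

Fixpoint Cpown (z : C) (n : nat) : C :=
  match n with
  | O => RtoC 1
  | S m => Cmult z (Cpown z m)
  end.

From Stdlib Require Import Reals Lra Lia.
From Coquelicot Require Import Coquelicot.
Open Scope R_scope.

(* Since b_j >= 0, the Bloch condition at a real point 0 <= r < 1 bounds every
   partial sum of f'(r): (1 - r^2) sum_(k <= N) k b_k r^(k-1) <= 1.  At the radius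
   r = sqrt ((n-1)/(n+1)), where (1 - r^2) r^(n-1) = 1/(n B_n), this gives
   sum_(k <= n) k b_k <= n B_n, hence b_k <= B_k <= B_n (B_n increases with n), and
   so F_n(f) <= B_n sum_(k <= n) k b_k <= n B_n^2.  In case of equality
   sum_(k <= n) k b_k = n B_n, and at the same radius no room is left for a
   coefficient b_k with k <> n: its weight r^(k-1) exceeds r^(n-1) when k < n and
   is not accounted for at all when k > n. *)

Lemma le_of_derive_nonneg (F F' : R -> R) (x y : R) :
  x <= y -> (forall z, x <= z <= y -> is_derive F z (F' z) /\ 0 <= F' z) ->
  F x <= F y.
Proof.
  intros Hxy HF.
  destruct (Req_dec x y) as [<- | Hne]; [lra |].
  assert (Hmin : Rmin x y = x) by (apply Rmin_left; lra).
  assert (Hmax : Rmax x y = y) by (apply Rmax_right; lra).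
  destruct (MVT_gen F x y F') as [z [Hz Hmvt]]; rewrite ?Hmin, ?Hmax in *.
  - intros z Hz. apply HF. lra.
  - intros z Hz. apply continuity_pt_filterlim.
    apply (@ex_derive_continuous R_AbsRing R_NormedModule).
    exists (F' z). apply HF. lra.
  - assert (0 <= F' z) by (apply HF; lra). nra.
Qed.

Lemma ln_add_sub_ge (t : R) : 0 <= t < 1 -> 2 * t <= ln (1 + t) - ln (1 - t).
Proof.
  intros Ht.
  pose (chi u := ln (1 + u) - ln (1 - u) - 2 * u).
  assert (Hchi : chi 0 <= chi t).
  { apply (le_of_derive_nonneg chi (fun u => 2 * u ^ 2 / (1 - u ^ 2))); [lra |].
    intros u Hu. split.
    - unfold chi. auto_derive; [lra |]. field. split; nra.
    - apply Rmult_le_pos; [nra |]. apply Rlt_le, Rinv_0_lt_compat. nra. }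
  unfold chi in Hchi. rewrite Rplus_0_r, Rminus_0_r, ln_1 in Hchi. lra.
Qed.

Lemma INR_ge2 (n : nat) : (2 <= n)%nat -> 2 <= INR n.
Proof. intros Hn. apply le_INR in Hn. simpl in Hn. lra. Qed.

Definition lnB (x : R) : R :=
  ln (x + 1) - ln (2 * x) + (x - 1) / 2 * (ln (x + 1) - ln (x - 1)).

Lemma Bconst_exp_lnB (n : nat) : (2 <= n)%nat -> Bconst n = exp (lnB (INR n)).
Proof.
  intros Hn.
  pose proof (INR_ge2 n Hn) as Hx.
  destruct n as [|[|n]]; [lia | lia |].
  change (Bconst (S (S n))) with
    ((INR (S (S n)) + 1) / (2 * INR (S (S n))) *
     Rpower ((INR (S (S n)) + 1) / (INR (S (S n)) - 1)) ((INR (S (S n)) - 1) / 2)).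
  unfold lnB, Rpower. rewrite exp_plus, <- ln_div, exp_ln by (try apply Rdiv_lt_0_compat; lra).
  rewrite ln_div by lra. reflexivity.
Qed.

Lemma lnB_le (x y : R) : 1 < x -> x <= y -> lnB x <= lnB y.
Proof.
  intros Hx Hxy.
  apply (le_of_derive_nonneg lnB (fun z => (ln (z + 1) - ln (z - 1)) / 2 - / z)); [lra |].
  intros z Hz. split.
  - unfold lnB. auto_derive; [repeat split; lra |].
    replace (z + - (1)) with (z - 1) by ring. field. repeat split; lra.
  - assert (Ht : 0 <= / z < 1).
    { split; [apply Rlt_le, Rinv_0_lt_compat; lra |].
      rewrite <- Rinv_1. apply Rinv_lt_contravar; lra. }
    pose proof (ln_add_sub_ge (/ z) Ht) as Hln.
    rewrite <- ln_div in Hln by lra.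
    replace ((1 + / z) / (1 - / z)) with ((z + 1) / (z - 1)) in Hln by (field; lra).
    rewrite ln_div in Hln by lra. lra.
Qed.

Lemma Bconst_mono (j n : nat) : (2 <= j <= n)%nat -> Bconst j <= Bconst n.
Proof.
  intros Hjn. rewrite !Bconst_exp_lnB by lia.
  assert (Hln : lnB (INR j) <= lnB (INR n)).
  { apply lnB_le; [pose proof (INR_ge2 j ltac:(lia)); lra | apply le_INR; lia]. }
  destruct (Rle_lt_or_eq_dec _ _ Hln) as [Hlt | ->]; [apply Rlt_le, exp_increasing |]; lra.
Qed.

Lemma one_le_Bconst (n : nat) : (1 <= n)%nat -> 1 <= Bconst n.
Proof.
  intros Hn. destruct (Nat.eq_dec n 1) as [-> | Hn1]; [simpl; lra |].
  apply Rle_trans with (Bconst 2); [| apply Bconst_mono; lia].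
  change (Bconst 2) with ((INR 2 + 1) / (2 * INR 2) *
    Rpower ((INR 2 + 1) / (INR 2 - 1)) ((INR 2 - 1) / 2)).
  simpl INR.
  replace ((1 + 1 + 1) / (1 + 1 - 1)) with 3 by field.
  replace ((1 + 1 - 1) / 2) with (/ 2) by field.
  rewrite Rpower_sqrt by lra.
  assert (4 / 3 <= sqrt 3).
  { rewrite <- (sqrt_square (4 / 3)) by lra. apply sqrt_le_1_alt. lra. }
  lra.
Qed.

Lemma Bconst_le (j n : nat) : (1 <= j <= n)%nat -> Bconst j <= Bconst n.
Proof.
  intros Hjn. destruct (Nat.eq_dec j 1) as [-> | Hj1].
  - apply one_le_Bconst. lia.
  - apply Bconst_mono. lia.
Qed.

(* [r] maximises [(1 - r^2) r^m] on [0, 1); it is [r = sqrt (m / (m + 2))],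
   and for [m = 0] the identity [0 ^ 0 = 1] makes [r = 0] work. *)
Lemma Bconst_extremal (m : nat) :
  exists r, 0 <= r < 1 /\ (1 - r ^ 2) * r ^ m * (INR (S m) * Bconst (S m)) = 1.
Proof.
  destruct m as [|m]; [exists 0; simpl; split; lra |].
  set (x := INR (S (S m))).
  assert (Hx : 2 <= x) by (apply INR_ge2; lia).
  set (q := (x - 1) / (x + 1)).
  assert (Hq : 0 < q < 1).
  { unfold q. split; [apply Rdiv_lt_0_compat; lra |].
    apply Rmult_lt_reg_r with (x + 1); [lra |]. field_simplify; lra. }
  exists (sqrt q).
  assert (Hr2 : sqrt q ^ 2 = q) by (rewrite <- Rsqr_pow2; apply Rsqr_sqrt; lra).
  assert (Hrm : sqrt q ^ S m = Rpower q ((x - 1) / 2)).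
  { rewrite <- Rpower_sqrt, <- Rpower_pow, Rpower_mult by (try apply exp_pos; lra).
    f_equal. unfold x. rewrite (S_INR (S m)). field. }
  assert (Hinv : Rpower q ((x - 1) / 2) * Rpower (/ q) ((x - 1) / 2) = 1).
  { rewrite Rpower_mult_distr, Rinv_r by (try apply Rinv_0_lt_compat; lra).
    unfold Rpower. rewrite ln_1, Rmult_0_r. apply exp_0. }
  split; [split; [apply sqrt_pos | rewrite <- sqrt_1; apply sqrt_lt_1_alt; lra] |].
  rewrite Hr2, Hrm.
  change (Bconst (S (S m))) with
    ((x + 1) / (2 * x) * Rpower ((x + 1) / (x - 1)) ((x - 1) / 2)).
  replace ((x + 1) / (x - 1)) with (/ q) by (unfold q; field; lra).
  replace (1 - q) with (2 / (x + 1)) by (unfold q; field; lra).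
  transitivity (Rpower q ((x - 1) / 2) * Rpower (/ q) ((x - 1) / 2)); [field; lra | exact Hinv].
Qed.

Lemma filterlim_Re (z : C) : filterlim Re (locally z) (locally (Re z)).
Proof. intros P [eps HP]. exists eps. intros w [Hw _]. exact (HP _ Hw). Qed.

Lemma filterlim_RtoC (x : R) : filterlim RtoC (locally x) (locally (RtoC x)).
Proof.
  intros P [eps HP]. exists eps. intros y Hy.
  apply HP. split; [exact Hy | apply ball_center].
Qed.

Lemma sum_n_pseries_RtoC (a : nat -> R) (x : R) (N : nat) :
  sum_n (fun k => scal (pow_n (K := C_AbsRing) (RtoC x) k) (RtoC (a k))) N =
  RtoC (sum_n (fun k => a k * x ^ k) N).
Proof.
  assert (Hterm : forall k, scal (pow_n (K := C_AbsRing) (RtoC x) k) (RtoC (a k))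
                            = RtoC (a k * x ^ k)).
  { intros k. rewrite RtoC_mult, (Cmult_comm (RtoC (a k))).
    apply (f_equal (fun u => Cmult u (RtoC (a k)))).
    induction k as [|k IH]; [reflexivity |]. simpl. rewrite IH. symmetry. apply RtoC_mult. }
  induction N as [|N IH].
  - rewrite !sum_O. apply Hterm.
  - rewrite !sum_Sn, IH, Hterm. symmetry. apply RtoC_plus.
Qed.

Lemma is_pseries_RtoC (a : nat -> R) (x l : R) :
  is_pseries a x l -> is_pseries (fun k => RtoC (a k)) (RtoC x) (RtoC l).
Proof.
  intros H. apply is_pseries_R in H.
  unfold is_pseries, is_series.
  eapply filterlim_ext; [intros N; symmetry; apply sum_n_pseries_RtoC |].
  eapply filterlim_comp; [exact H | apply filterlim_RtoC].
Qed.

Lemma is_pseries_Re (a : nat -> R) (x : R) (l : C) :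
  is_pseries (fun k => RtoC (a k)) (RtoC x) l -> is_pseries a x (Re l).
Proof.
  intros H. apply is_pseries_R.
  unfold is_pseries, is_series in H.
  eapply filterlim_ext; [| eapply filterlim_comp; [exact H | apply filterlim_Re]].
  intros N. exact (f_equal Re (sum_n_pseries_RtoC a x N)).
Qed.

Lemma CV_radius_ge_of_ex_pseries (a : nat -> R) (x : R) :
  ex_pseries a x -> Rbar_le (Rabs x) (CV_radius a).
Proof.
  intros Hx. apply Rbar_not_lt_le. intros Hlt.
  apply (CV_disk_outside a x Hlt), ex_series_lim_0, ex_pseries_R, Hx.
Qed.

Lemma sum_n_le_of_is_series (a : nat -> R) (l : R) :
  (forall k, 0 <= a k) -> is_series a l -> forall N, sum_n a N <= l.
Proof.
  intros Ha Hl N. apply (is_lim_seq_incr_compare (sum_n a) l Hl).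
  intros k. rewrite sum_Sn. specialize (Ha (S k)). unfold plus. simpl. lra.
Qed.

Lemma bloch_derivative_partial_sums (b : nat -> R) (f : C -> C) :
  (forall j, 0 <= b j) -> has_taylor_coeffs b f -> bloch_norm_le1 b f ->
  forall r, 0 <= r < 1 -> forall N,
  (1 - r ^ 2) * sum_f_R0 (fun k => INR (S k) * b (S k) * r ^ k) N <= 1.
Proof.
  intros Hb Htaylor Hbloch r Hr N.
  assert (Hdisc : forall x, 0 <= x < 1 -> in_disc (RtoC x)).
  { intros x Hx. unfold in_disc. rewrite Cmod_R, Rabs_pos_eq; lra. }
  (* The Taylor series converges at the real point s > r, hence so does f' at r. *)
  set (s := (1 + r) / 2).
  assert (Hrad : Rbar_lt (Rabs r) (CV_radius (PS_derive b))).
  { rewrite CV_radius_derive.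
    assert (Hs : ex_pseries b s).
    { eexists. apply is_pseries_Re, Htaylor, Hdisc. unfold s. lra. }
    apply CV_radius_ge_of_ex_pseries in Hs.
    rewrite !Rabs_pos_eq in * by (unfold s; lra).
    destruct (CV_radius b); simpl in *; unfold s in *; auto; lra. }
  set (D := PSeries (PS_derive b) r).
  assert (HD : is_pseries (PS_derive b) r D) by apply PSeries_correct, CV_radius_inside, Hrad.
  assert (Hbloch_r : (1 - r ^ 2) * Rabs D <= 1).
  { pose proof (Hbloch _ _ (Hdisc r Hr) (is_pseries_RtoC _ _ _ HD)) as H.
    rewrite !Cmod_R, Rabs_pos_eq in H by lra.
    pose proof (Cmod_ge_0 (f (RtoC 0))). lra. }
  assert (Hpartial : sum_f_R0 (fun k => INR (S k) * b (S k) * r ^ k) N <= D).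
  { rewrite <- sum_n_Reals. apply sum_n_le_of_is_series; [| apply is_pseries_R, HD].
    intros k. apply Rmult_le_pos; [apply Rmult_le_pos; [apply pos_INR | apply Hb] |].
    apply pow_le. lra. }
  apply Rle_trans with ((1 - r ^ 2) * Rabs D); [| exact Hbloch_r].
  apply Rmult_le_compat_l; [nra |]. pose proof (Rle_abs D). lra.
Qed.

Lemma pow_le_pow_lt_1 (r : R) (k m : nat) : 0 <= r < 1 -> (k <= m)%nat -> r ^ m <= r ^ k.
Proof.
  intros Hr Hkm. replace m with (k + (m - k))%nat by lia. rewrite pow_add.
  pose proof (pow_le r k (proj1 Hr)).
  destruct (m - k)%nat as [|d]; [simpl; lra |].
  pose proof (pow_lt_1_compat r (S d) Hr ltac:(lia)). nra.
Qed.

Lemma pow_lt_pow_lt_1 (r : R) (k m : nat) : 0 < r < 1 -> (k < m)%nat -> r ^ m < r ^ k.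
Proof.
  intros Hr Hkm. replace m with (k + (m - k))%nat by lia. rewrite pow_add.
  pose proof (pow_lt r k (proj1 Hr)).
  pose proof (pow_lt_1_compat r (m - k) ltac:(lra) ltac:(lia)). nra.
Qed.

Lemma sum_f_R0_ge_term (a : nat -> R) (N j : nat) :
  (forall k, 0 <= a k) -> (j <= N)%nat -> a j <= sum_f_R0 a N.
Proof.
  intros Ha Hj. induction N as [|N IH].
  - replace j with 0%nat by lia. simpl. lra.
  - rewrite tech5. destruct (Nat.eq_dec j (S N)) as [-> | Hne].
    + pose proof (cond_pos_sum a N Ha). lra.
    + specialize (IH ltac:(lia)). specialize (Ha (S N)). lra.
Qed.

Lemma sum_f_R0_truncate (g : nat -> R) (m N : nat) : (m <= N)%nat ->
  sum_f_R0 (fun k => if (k <=? m)%nat then g k else 0) N = sum_f_R0 g m.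
Proof.
  intros HmN. replace N with (m + (N - m))%nat by lia.
  induction (N - m)%nat as [|d IH].
  - rewrite Nat.add_0_r. apply sum_eq. intros k Hk.
    destruct (Nat.leb_spec k m); [reflexivity | lia].
  - rewrite Nat.add_succ_r, tech5, IH.
    destruct (Nat.leb_spec (S (m + d)) m); [lia | ring].
Qed.

Definition excess (r : R) (m k : nat) : R := r ^ k - if (k <=? m)%nat then r ^ m else 0.

Lemma excess_nonneg (r : R) (m k : nat) : 0 <= r < 1 -> 0 <= excess r m k.
Proof.
  intros Hr. unfold excess. destruct (Nat.leb_spec k m).
  - pose proof (pow_le_pow_lt_1 r k m Hr ltac:(lia)). lra.
  - pose proof (pow_le r k (proj1 Hr)). lra.
Qed.

Lemma excess_pos (r : R) (m k : nat) : 0 < r < 1 -> k <> m -> 0 < excess r m k.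
Proof.
  intros Hr Hkm. unfold excess. destruct (Nat.leb_spec k m).
  - pose proof (pow_lt_pow_lt_1 r k m Hr ltac:(lia)). lra.
  - pose proof (pow_lt r k (proj1 Hr)). lra.
Qed.

Section CoefficientBounds.

(* [c k] stands for b_(k+1), so the sums below are partial sums of f'(r). *)
Variable c : nat -> R.
Hypothesis c_nonneg : forall k, 0 <= c k.
Hypothesis partial_sums_le : forall r, 0 <= r < 1 -> forall N,
  (1 - r ^ 2) * sum_f_R0 (fun k => INR (S k) * c k * r ^ k) N <= 1.

Definition weighted_coef_sum (m : nat) : R := sum_f_R0 (fun k => INR (S k) * c k) m.

Lemma partial_sum_decomp (r : R) (m N : nat) : (m <= N)%nat ->
  sum_f_R0 (fun k => INR (S k) * c k * r ^ k) N =
  r ^ m * weighted_coef_sum m + sum_f_R0 (fun k => INR (S k) * c k * excess r m k) N.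
Proof.
  intros HmN. unfold weighted_coef_sum.
  rewrite scal_sum, <- (sum_f_R0_truncate _ m N HmN), <- plus_sum.
  apply sum_eq. intros k _. unfold excess. destruct (k <=? m)%nat; ring.
Qed.

Lemma excess_term_nonneg (r : R) (m k : nat) : 0 <= r < 1 ->
  0 <= INR (S k) * c k * excess r m k.
Proof.
  intros Hr. apply Rmult_le_pos; [apply Rmult_le_pos; [apply pos_INR | apply c_nonneg] |].
  apply excess_nonneg, Hr.
Qed.

Lemma weighted_coef_sum_le (m : nat) : weighted_coef_sum m <= INR (S m) * Bconst (S m).
Proof.
  destruct (Bconst_extremal m) as [r [Hr Hext]].
  assert (Hpos : 0 < (1 - r ^ 2) * r ^ m).
  { assert (Hnonneg : 0 <= (1 - r ^ 2) * r ^ m) by (apply Rmult_le_pos; [nra | apply pow_le; lra]).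
    destruct (Rle_lt_or_eq_dec _ _ Hnonneg) as [Hlt | Heq]; [exact Hlt |].
    rewrite <- Heq in Hext. lra. }
  pose proof (partial_sums_le r Hr m) as Hsum.
  rewrite (partial_sum_decomp r m m) in Hsum by lia.
  pose proof (cond_pos_sum _ m (fun k => excess_term_nonneg r m k Hr)) as Hexcess.
  apply Rmult_le_reg_l with ((1 - r ^ 2) * r ^ m); [exact Hpos |].
  assert (0 <= 1 - r ^ 2) by nra. nra.
Qed.

Lemma coef_le_Bconst (j : nat) : c j <= Bconst (S j).
Proof.
  assert (Hterm : INR (S j) * c j <= weighted_coef_sum j).
  { apply (sum_f_R0_ge_term (fun k => INR (S k) * c k)); [| lia].
    intros k. apply Rmult_le_pos; [apply pos_INR | apply c_nonneg]. }
  pose proof (weighted_coef_sum_le j).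
  apply Rmult_le_reg_l with (INR (S j)); [apply lt_0_INR; lia | lra].
Qed.

Lemma weighted_sq_sum_le (m : nat) :
  sum_f_R0 (fun k => INR (S k) * c k ^ 2) m <= Bconst (S m) * weighted_coef_sum m.
Proof.
  unfold weighted_coef_sum. rewrite scal_sum. apply sum_Rle. intros k Hk.
  assert (c k <= Bconst (S m)).
  { apply Rle_trans with (Bconst (S k)); [apply coef_le_Bconst | apply Bconst_le; lia]. }
  pose proof (c_nonneg k). pose proof (pos_INR (S k)).
  replace (INR (S k) * c k ^ 2) with (INR (S k) * c k * c k) by ring.
  apply Rmult_le_compat_l; [apply Rmult_le_pos |]; lra.
Qed.

Lemma weighted_sq_sum_le_Bconst (m : nat) :
  sum_f_R0 (fun k => INR (S k) * c k ^ 2) m <= INR (S m) * Bconst (S m) ^ 2.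
Proof.
  pose proof (weighted_sq_sum_le m). pose proof (weighted_coef_sum_le m).
  pose proof (one_le_Bconst (S m) ltac:(lia)). nra.
Qed.

(* The bound [(1 - r^2) * partial sum <= 1] is already attained by the part
   [r^m * weighted_coef_sum m] of the decomposition, leaving nothing for the excess. *)
Lemma excess_term_nonpos (m : nat) (r : R) : 0 <= r < 1 ->
  (1 - r ^ 2) * r ^ m * weighted_coef_sum m = 1 ->
  forall j, INR (S j) * c j * excess r m j <= 0.
Proof.
  intros Hr Hext j.
  pose proof (partial_sums_le r Hr (Nat.max j m)) as Hsum.
  rewrite (partial_sum_decomp r m) in Hsum by lia.
  pose proof (sum_f_R0_ge_term _ (Nat.max j m) j
                (fun k => excess_term_nonneg r m k Hr) ltac:(lia)).
  assert (0 < 1 - r ^ 2) by nra. nra.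
Qed.

Lemma weighted_sq_sum_eq_Bconst (m : nat) : (1 <= m)%nat ->
  sum_f_R0 (fun k => INR (S k) * c k ^ 2) m = INR (S m) * Bconst (S m) ^ 2 ->
  (forall j, j <> m -> c j = 0) /\ c m = Bconst (S m).
Proof.
  intros Hm Heq.
  assert (HT : weighted_coef_sum m = INR (S m) * Bconst (S m)).
  { pose proof (weighted_sq_sum_le m). pose proof (weighted_coef_sum_le m).
    pose proof (one_le_Bconst (S m) ltac:(lia)). nra. }
  destruct (Bconst_extremal m) as [r [Hr Hext]].
  assert (Hr0 : 0 < r).
  { destruct (Rle_lt_or_eq_dec _ _ (proj1 Hr)) as [| <-]; [assumption |].
    rewrite (pow_i m) in Hext by lia. lra. }
  rewrite <- HT in Hext.
  assert (Hzero : forall j, j <> m -> c j = 0).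
  { intros j Hj.
    pose proof (excess_term_nonpos m r Hr Hext j).
    pose proof (excess_pos r m j (conj Hr0 (proj2 Hr)) Hj).
    pose proof (c_nonneg j). pose proof (lt_0_INR (S j) ltac:(lia)).
    assert (0 < INR (S j) * excess r m j) by (apply Rmult_lt_0_compat; lra). nra. }
  split; [exact Hzero |].
  destruct m as [|m]; [lia |].
  unfold weighted_coef_sum in HT. rewrite tech5, sum_eq_R0 in HT.
  - pose proof (lt_0_INR (S (S m)) ltac:(lia)). nra.
  - intros k Hk. rewrite Hzero by lia. ring.
Qed.

End CoefficientBounds.

Lemma sum_n_single {G : AbelianMonoid} (a : nat -> G) (n N : nat) :
  (forall k, k <> n -> a k = zero) -> sum_n a N = if (n <=? N)%nat then a n else zero.
Proof.
  intros Ha. induction N as [|N IH].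
  - rewrite sum_O. destruct n as [|n]; [reflexivity | apply Ha; lia].
  - rewrite sum_Sn, IH. destruct (Nat.eq_dec n (S N)) as [-> | Hne].
    + rewrite Nat.leb_refl, (proj2 (Nat.leb_gt (S N) N)) by lia. apply plus_zero_l.
    + rewrite (Ha (S N)), plus_zero_r by auto.
      destruct (Nat.leb_spec n N), (Nat.leb_spec n (S N)); auto; lia.
Qed.

Lemma is_series_single {K : AbsRing} {V : NormedModule K} (a : nat -> V) (n : nat) :
  (forall k, k <> n -> a k = zero) -> is_series a (a n).
Proof.
  intros Ha. apply (filterlim_ext_loc (fun _ => a n)); [| apply filterlim_const].
  exists n. intros N HN. rewrite (sum_n_single a n N Ha).
  destruct (Nat.leb_spec n N); [reflexivity | lia].
Qed.

Lemma Cpown_pow_n (z : C) (n : nat) : Cpown z n = pow_n z n.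
Proof. induction n as [|n IH]; [reflexivity |]. simpl. rewrite IH. reflexivity. Qed.

Lemma taylor_monomial (b : nat -> R) (f : C -> C) (n : nat) :
  has_taylor_coeffs b f -> (forall k, k <> n -> b k = 0) ->
  forall z, in_disc z -> f z = Cmult (RtoC (b n)) (Cpown z n).
Proof.
  intros Htaylor Hb z Hz.
  apply (filterlim_locally_unique _ _ _ (Htaylor z Hz)).
  rewrite Cpown_pow_n, Cmult_comm.
  apply (is_series_single (fun k => scal (pow_n z k) (RtoC (b k)))).
  intros k Hk. rewrite Hb by exact Hk.
  exact (@scal_zero_r _ (NormedModule.ModuleSpace C_AbsRing C_NormedModule) _).
Qed.

Lemma calF_succ (b : nat -> R) (m : nat) : (forall j, 0 <= b j) ->
  calF b (S m) = sum_f_R0 (fun k => INR (S k) * b (S k) ^ 2) m.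
Proof.
  intros Hb. unfold calF, sum_f. replace (S m - 1)%nat with m by lia.
  apply sum_eq. intros k _. replace (k + 1)%nat with (S k) by lia.
  rewrite Rabs_pos_eq by apply Hb. reflexivity.
Qed.

Theorem theorem2p2 :
  forall (b : nat -> R) (f : C -> C),
    b 0%nat = 0 ->
    (forall j : nat, (1 <= j)%nat -> 0 <= b j) ->
    has_taylor_coeffs b f ->
    bloch_norm_le1 b f ->
    forall n : nat, (2 <= n)%nat ->
      calF b n <= INR n * Bconst n ^ 2 /\
      (calF b n = INR n * Bconst n ^ 2 ->
       forall z : C, in_disc z -> f z = Cmult (RtoC (Bconst n)) (Cpown z n)).
Proof.
  intros b f Hb0 Hb_pos Htaylor Hbloch n Hn.
  assert (Hb : forall j, 0 <= b j) by (intros [|j]; [rewrite Hb0; lra | apply Hb_pos; lia]).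
  pose proof (bloch_derivative_partial_sums b f Hb Htaylor Hbloch) as Hpartial.
  destruct n as [|m]; [lia |].
  rewrite (calF_succ b m Hb). split.
  - exact (weighted_sq_sum_le_Bconst (fun k => b (S k)) (fun k => Hb (S k)) Hpartial m).
  - intros Heq.
    destruct (weighted_sq_sum_eq_Bconst (fun k => b (S k)) (fun k => Hb (S k)) Hpartial m
                ltac:(lia) Heq) as [Hzero Hcoef].
    rewrite <- Hcoef. apply taylor_monomial; [exact Htaylor |].
    intros [|k] Hk; [exact Hb0 | apply Hzero; lia].
Qed.
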